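(* Let $B$ be the complex unital $*$-algebra generated by hermitian $p,q$ with relation $pq-qp=-\mathrm{i}\cdot 1$, let $d:=\mathrm{i}p$, $A:=\mathbb{C}[q]\subseteq B$, and $X:=\operatorname{span}\{a\,d^2\,b: a,b\in A\}\subseteq B$, a $*$-bimodule for $A$ under multiplication and involution of $B$. Let $\mu$ be a Radon measure on $\mathbb{R}$, not supported on a finite set, for which all polynomials are integrable, and let $f(a)=\int a\,d\mu$ on $A$ (polynomials in $q$ identified with polynomials in the real variable). Then: (i) the map $F_0\big(\sum_j a_j d^2 b_j\big):=\int\sum_j a_j b_j\,d\mu$ is a well-defined hermitian linear functional on $X$; (ii) for $x=\sum_j a_jd^2b_j$ and $h:=\sum_j a_jb_j$, one has $|F_0(a^+\cdot x)|^2\le f(h^+h)\,f(a^+a)$ for all $a\in A$; (iii) the GNS representation of $f$ acts on $\mathcal{D}_f=\mathbb{C}[x]\subseteq L^2(\mathbb{R};\mu)$ by multiplication, $\rho_f(a)b=ab$, with $\varphi_f=1$, and setting $\theta_{F_0}\big(\sum_j a_jd^2b_j\big)b:=\sum_j a_jb_jb$ for $b\in\mathcal{D}_f$ gives a well-defined map such that $(\theta_{F_0},\rho_f)$ is a strong $*$-representation of $X$ on $\mathcal{D}_f$ with $F_0(a\cdot x\cdot b)=\langle\theta_{F_0}(x)\rho_f(b)\varphi_f,\rho_f(a^+)\varphi_f\rangle$ for all $a,b\in A$, $x\in X$; in particular $\theta_{F_0}(d^2)=I$.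
   Context: A $*$-bimodule $X$ for $A$: a complex $A$-bimodule (unital left and right $A$-module with commuting actions) with conjugate-linear involution satisfying $(a\cdot x\cdot b)^+=b^+\cdot x^+\cdot a^+$. On $A=\mathbb{C}[q]$, $a^+$ is the polynomial with complex-conjugated coefficients. Hermitian: $F(x^+)=\overline{F(x)}$. GNS representation of a positive functional $f$: $\mathcal{D}_f=A/\{a:f(a^+a)=0\}$ with inner product $f(b^+a)$, $\rho_f(a)(b+\mathcal{N}_f)=ab+\mathcal{N}_f$, $\varphi_f=1+\mathcal{N}_f$. A $*$-representation of $X$ on an inner product space $\mathcal{D}$ with completion $\mathcal{H}$ is a pair $(\theta,\rho)$ with $\rho$ a $*$-representation of $A$ ($\langle\rho(a)\varphi,\psi\rangle=\langle\varphi,\rho(a^+)\psi\rangle$) with $\rho(1)=I$, and $\theta$ a linear map from $X$ into operators $t:\mathcal{D}\to\mathcal{H}$ with $\mathcal{D}(t^* )\supseteq\mathcal{D}$, such that $\theta(x^+)=\theta(x)^*|_{\mathcal{D}}$ and $\langle\theta(a\cdot x\cdot b)\varphi,\psi\rangle=\langle\theta(x)\rho(b)\varphi,\rho(a^+)\psi\rangle$. It is strong if every $\theta(x)$ maps $\mathcal{D}$ into $\mathcal{D}$ and $\theta(x)^*$ also maps $\mathcal{D}$ into $\mathcal{D}$. *)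

From HB Require Import structures.
From mathcomp Require Import all_boot all_order all_algebra.
From mathcomp Require Import all_classical all_reals all_analysis.
From mathcomp Require Import complex.
Set Implicit Arguments. Unset Strict Implicit. Unset Printing Implicit Defensive.
Import Order.TTheory GRing.Theory Num.Theory.
Local Open Scope ring_scope.
Local Open Scope classical_set_scope.

Section Defs.
Variable R : realType.
Local Notation C := (R[i]).

(** The involution on A = C[q]: complex conjugation of the coefficients. *)
Definition pconj (p : {poly C}) : {poly C} := map_poly (@Num.conj C) p.

(** ---------------------------------------------------------------------
    The Weyl algebra B, realized concretely (and faithfully) as the algebra
    of polynomial differential operators acting on C[x]:
      q = multiplication by x,   p = -i d/dx,   so that  pq - qp = -i.  Two elements of B are equal iff they act equally
    on C[x] (the Schroedinger-type representation of the Weyl algebra on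
    C[x] is faithful).
    --------------------------------------------------------------------- *)
Definition qop (g : {poly C}) : {poly C} := 'X * g.
Definition pop (g : {poly C}) : {poly C} := (- 'i) *: g^`().
Definition dop (g : {poly C}) : {poly C} := 'i *: pop g.
Definition Aop (a : {poly C}) (g : {poly C}) : {poly C} := a * g.

(** A formal expression  sum_j a_j d^2 b_j  (an element of X) *)
Definition Xsum := seq ({poly C} * {poly C}).

Definition Bval (s : Xsum) : {poly C} -> {poly C} :=
  fun g => \sum_(c <- s) Aop c.1 (dop (dop (Aop c.2 g))).

(** Vector space, bimodule and involution structure of X, on representatives:
    z (sum a_j d^2 b_j) = sum (z a_j) d^2 b_j,
    a . (sum a_j d^2 b_j) . b = sum (a a_j) d^2 (b_j b),
    (sum a_j d^2 b_j)^+ = sum b_j^+ d^2 a_j^+   (since (d^2)^+ = d^2). *)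
Definition Xscale (z : C) (s : Xsum) : Xsum := [seq (z *: c.1, c.2) | c <- s].
Definition Xact (a : {poly C}) (s : Xsum) (b : {poly C}) : Xsum :=
  [seq (a * c.1, c.2 * b) | c <- s].
Definition Xlact (a : {poly C}) (s : Xsum) : Xsum := [seq (a * c.1, c.2) | c <- s].
Definition Xadj (s : Xsum) : Xsum := [seq (pconj c.2, pconj c.1) | c <- s].
Definition Xd2 : Xsum := [:: (1, 1)].

Definition hsum (s : Xsum) : {poly C} := \sum_(c <- s) c.1 * c.2.

Definition cint (mu : {measure set R -> \bar R}) (g : R -> C) : C :=
  real_complex R (Rintegral mu setT (fun x => complex.Re (g x)))
  + 'i * real_complex R (Rintegral mu setT (fun x => complex.Im (g x))).

Definition fmu (mu : {measure set R -> \bar R}) (a : {poly C}) : C :=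
  cint mu (fun x => a.[real_complex R x]).

Definition F0 (mu : {measure set R -> \bar R}) (s : Xsum) : C := fmu mu (hsum s).

Definition gns_ip (mu : {measure set R -> \bar R}) (a b : {poly C}) : C :=
  fmu mu (pconj b * a).
Definition gns_rho (a b : {poly C}) : {poly C} := a * b.
Definition gns_phi : {poly C} := 1.

Definition thetaF0 (s : Xsum) (b : {poly C}) : {poly C} := hsum s * b.

Definition is_inner_product (D : lmodType C) (ip : D -> D -> C) : Prop :=
  [/\ forall z u v w, ip (z *: u + v) w = z * ip u w + ip v w,
      forall u v, ip v u = Num.conj (ip u v),
      forall u, 0 <= ip u u
    & forall u, ip u u = 0 -> u = 0].

(** The conditions
    [domain of adjoint of theta(x) contains D, theta(x^+) = adjoint restricted to D] are expressed
    through the inner product on D (D is dense in its completion H). *)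
Record strong_star_rep (D : lmodType C) (ip : D -> D -> C)
    (theta : Xsum -> D -> D) (rho : {poly C} -> D -> D) : Prop := {
  ssr_rho_lin : forall a z u v, rho a (z *: u + v) = z *: rho a u + rho a v;
  ssr_rho_linA : forall a b z u, rho (z *: a + b) u = z *: rho a u + rho b u;
  ssr_rho_mul : forall a b u, rho (a * b) u = rho a (rho b u);
  ssr_rho_one : forall u, rho 1 u = u;
  ssr_rho_star : forall a u v, ip (rho a u) v = ip u (rho (pconj a) v);
  ssr_theta_wd : forall s1 s2, Bval s1 =1 Bval s2 -> forall u, theta s1 u = theta s2 u;
  ssr_theta_add : forall s1 s2 u, theta (s1 ++ s2) u = theta s1 u + theta s2 u;
  ssr_theta_scale : forall z s u, theta (Xscale z s) u = z *: theta s u;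
  ssr_theta_lin : forall s z u v, theta s (z *: u + v) = z *: theta s u + theta s v;
  (* theta(x^+) = theta(x)^* restricted to D (in particular D is in the domain
     of theta(x)^* and theta(x)^* maps D into D: strongness) *)
  ssr_theta_star : forall s u v, ip (theta s u) v = ip u (theta (Xadj s) v);
  ssr_theta_bimod : forall a b s u v,
    ip (theta (Xact a s b) u) v = ip (theta s (rho b u)) (rho (pconj a) v) }.

End Defs.

From HB Require Import structures.
From mathcomp Require Import all_boot all_order all_algebra.
From mathcomp Require Import all_classical all_reals all_analysis.
From mathcomp Require Import complex ring.
Set Implicit Arguments. Unset Strict Implicit.
Import Order.TTheory GRing.Theory Num.Theory.
Local Open Scope ring_scope.
Local Open Scope classical_set_scope.

(** Everything is driven by h = sum_j a_j b_j, the "coefficient of d^2" of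
    x = sum_j a_j d^2 b_j.  The proof has four independent ingredients:

    - Integration.  f(a) = int a dmu is a linear, hermitian functional on C[x]
      (complex integrals split into real and imaginary parts, and polynomials
      are integrable since all moments are).  It is positive, f(a^+ a) =
      int |a|^2 dmu >= 0, and faithful: if f(a^+ a) = 0 then a vanishes outside
      a mu-null set, while a nonzero polynomial has finitely many real zeros
      and mu charges every cofinite set.  So <a, b> = f(b^+ a) is an inner
      product on D_f = C[x].
    - Algebra of X.  In the faithful representation of the Weyl algebra on
      C[x] (q = x, d = d/dx), the double commutator [[x, q], q] applied to 1
      is 2 h, so h only depends on the element x of B; it is moreover compatible with
      sums, scalars, the bimodule actions and the involution.
    - Cauchy-Schwarz for abstract inner products over C.
    - Hence F_0(x) = f(h) and theta(x) b = h b inherit all required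
      properties, and the bound (ii) is Cauchy-Schwarz for <h, a>. *)

Section ComplexParts.
Variable R : rcfType.
Implicit Types (u v : R[i]) (x : R).

Lemma complex_ext u v : complex.Re u = complex.Re v -> complex.Im u = complex.Im v -> u = v.
Proof. by move=> hRe hIm; apply/eqP; rewrite eq_complex hRe hIm !eqxx. Qed.

Lemma ReD u v : complex.Re (u + v) = complex.Re u + complex.Re v.
Proof. by case: u => ? ?; case: v. Qed.

Lemma ImD u v : complex.Im (u + v) = complex.Im u + complex.Im v.
Proof. by case: u => ? ?; case: v. Qed.

Lemma ReM u v : complex.Re (u * v) = complex.Re u * complex.Re v - complex.Im u * complex.Im v.
Proof. by case: u => ? ?; case: v. Qed.

Lemma ImM u v : complex.Im (u * v) = complex.Re u * complex.Im v + complex.Im u * complex.Re v.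
Proof. by case: u => ? ?; case: v. Qed.

Lemma ReJ u : complex.Re (Num.conj u) = complex.Re u.
Proof. by case: u. Qed.

Lemma ImJ u : complex.Im (Num.conj u) = - complex.Im u.
Proof. by case: u. Qed.

Lemma Re_cplx x y : complex.Re (real_complex R x + 'i * real_complex R y) = x.
Proof. by rewrite /= !(mul0r, mul1r, subr0, addr0). Qed.

Lemma Im_cplx x y : complex.Im (real_complex R x + 'i * real_complex R y) = y.
Proof. by rewrite /= !(mul0r, mul1r, addr0, add0r). Qed.

End ComplexParts.

Section ComplexIntegral.
Variable R : realType.
Variable mu : {measure set R -> \bar R}.
Implicit Types (g h : R -> R[i]).

Local Notation I f := (Rintegral mu setT f).

Definition cintegrable g :=
  mu.-integrable setT (EFin \o (fun x => complex.Re (g x))) /\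
  mu.-integrable setT (EFin \o (fun x => complex.Im (g x))).

Lemma Re_cint g : complex.Re (cint mu g) = I (fun x => complex.Re (g x)).
Proof. exact: Re_cplx. Qed.

Lemma Im_cint g : complex.Im (cint mu g) = I (fun x => complex.Im (g x)).
Proof. exact: Im_cplx. Qed.

Lemma integrable_lin (a b : R) (f1 f2 : R -> R) :
  mu.-integrable setT (EFin \o f1) -> mu.-integrable setT (EFin \o f2) ->
  mu.-integrable setT (EFin \o (fun x => a * f1 x + b * f2 x)).
Proof.
move=> h1 h2; apply: (eq_integrable measurableT _ _ _
  (integrableD measurableT (integrableZl measurableT a h1) (integrableZl measurableT b h2))).
by move=> x _ /=; rewrite -!EFinM -EFinD.
Qed.

Lemma Rintegral_lin (a b : R) (f1 f2 : R -> R) :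
  mu.-integrable setT (EFin \o f1) -> mu.-integrable setT (EFin \o f2) ->
  I (fun x => a * f1 x + b * f2 x) = a * I f1 + b * I f2.
Proof.
move=> h1 h2; rewrite RintegralD //; last 2 first.
- apply: (eq_integrable measurableT _ _ _ (integrableZl measurableT a h1)).
  by move=> x _ /=; rewrite EFinM.
- apply: (eq_integrable measurableT _ _ _ (integrableZl measurableT b h2)).
  by move=> x _ /=; rewrite EFinM.
by rewrite !RintegralZl.
Qed.

Lemma cintegrableD g h : cintegrable g -> cintegrable h -> cintegrable (g \+ h).
Proof.
move=> [gRe gIm] [hRe hIm]; split.
- apply: (eq_integrable measurableT _ _ _ (integrable_lin 1 1 gRe hRe)) => x _ /=.
  by rewrite ReD !mul1r.
- apply: (eq_integrable measurableT _ _ _ (integrable_lin 1 1 gIm hIm)) => x _ /=.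
  by rewrite ImD !mul1r.
Qed.

Lemma cintegrableZ z g : cintegrable g -> cintegrable (fun x => z * g x).
Proof.
move=> [gRe gIm]; split.
- apply: (eq_integrable measurableT _ _ _ (integrable_lin (complex.Re z) (- complex.Im z) gRe gIm)).
  by move=> x _ /=; rewrite ReM mulNr.
- apply: (eq_integrable measurableT _ _ _ (integrable_lin (complex.Im z) (complex.Re z) gRe gIm)).
  by move=> x _ /=; rewrite ImM addrC.
Qed.

Lemma cintegrable_sum (J : Type) (r : seq J) (F : J -> R -> R[i]) :
  (forall i, cintegrable (F i)) -> cintegrable (fun x => \sum_(i <- r) F i x).
Proof.
move=> hF; elim: r => [|i r IH].
  split; apply: (eq_integrable measurableT (cst 0%E)); try exact: integrable0;
    by move=> x _ /=; rewrite big_nil.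
have -> : (fun x => \sum_(j <- i :: r) F j x) = F i \+ (fun x => \sum_(j <- r) F j x).
  by apply: funext => x; rewrite big_cons.
exact: cintegrableD.
Qed.

Lemma cintD g h : cintegrable g -> cintegrable h -> cint mu (g \+ h) = cint mu g + cint mu h.
Proof.
move=> [gRe gIm] [hRe hIm].
have eRe : I (fun x => complex.Re ((g \+ h) x))
         = I (fun x => complex.Re (g x)) + I (fun x => complex.Re (h x)).
  rewrite -[in RHS](mul1r (I _)) -[X in _ + X](mul1r (I _)) -Rintegral_lin //.
  by apply: eq_Rintegral => x _; rewrite ReD !mul1r.
have eIm : I (fun x => complex.Im ((g \+ h) x))
         = I (fun x => complex.Im (g x)) + I (fun x => complex.Im (h x)).
  rewrite -[in RHS](mul1r (I _)) -[X in _ + X](mul1r (I _)) -Rintegral_lin //.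
  by apply: eq_Rintegral => x _; rewrite ImD !mul1r.
by rewrite /cint eRe eIm !rmorphD; ring.
Qed.

Lemma cintZ z g : cintegrable g -> cint mu (fun x => z * g x) = z * cint mu g.
Proof.
move=> [gRe gIm]; apply: complex_ext; rewrite ?[in RHS]ReM ?[in RHS]ImM !(Re_cint, Im_cint).
- rewrite -mulNr -Rintegral_lin //.
  by apply: eq_Rintegral => x _; rewrite ReM mulNr.
- rewrite addrC -Rintegral_lin //.
  by apply: eq_Rintegral => x _; rewrite ImM addrC.
Qed.

Lemma cintJ g : cintegrable g -> cint mu (fun x => Num.conj (g x)) = Num.conj (cint mu g).
Proof.
move=> [_ gIm]; apply: complex_ext; rewrite ?ReJ ?ImJ !(Re_cint, Im_cint).
- by apply: eq_Rintegral => x _; rewrite ReJ.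
- rewrite -mulN1r -RintegralZl //.
  by apply: eq_Rintegral => x _; rewrite ImJ mulN1r.
Qed.

End ComplexIntegral.

Section NonnegIntegral.
Context (d : measure_display) (T : measurableType d) (R : realType).
Variable mu : {measure set T -> \bar R}.

Lemma Rintegral_eq0_null (f : T -> R) :
  mu.-integrable setT (EFin \o f) -> (forall x, 0 <= f x) -> Rintegral mu setT f = 0 ->
  exists N, [/\ measurable N, mu N = 0%E & [set x | f x != 0] `<=` N].
Proof.
move=> fint f_ge0 If0.
have absf0 : (\int[mu]_(x in setT) `|(EFin \o f) x|)%E = 0%E.
  transitivity (\int[mu]_(x in setT) (EFin \o f) x)%E.
    by apply: eq_integral => x _ /=; rewrite ger0_norm.
  by rewrite -(fineK (integrable_fin_num measurableT fint)) -[fine _]/(Rintegral mu setT f) If0.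
have [N [mN muN sN]] := (ae_eq_integral_abs mu measurableT (measurable_int mu fint)).1 absf0.
exists N; split=> // x /= fx0; apply: sN => /= fx_eq0.
by move: fx0; have [->] := fx_eq0 Logic.I; rewrite eqxx.
Qed.

End NonnegIntegral.

Lemma poly_real_zeros_finite (R : rcfType) (p : {poly R[i]}) :
  p != 0 -> finite_set [set x : R | p.[real_complex R x] = 0].
Proof.
move=> pn0; have [r pr] := closed_field_poly_normal p.
apply: (sub_finite_set _ (finite_seq [seq complex.Re z | z <- r])) => x /= px0.
have : root p (real_complex R x) by apply/rootP.
rewrite pr rootZ ?lead_coef_eq0 // root_prod_XsubC => xr.
by apply/mapP; exists (real_complex R x).
Qed.

Section PolynomialFunctional.
Variable R : realType.
Variable mu : {measure set R -> \bar R}.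
Hypothesis moments : forall n : nat, mu.-integrable setT (fun x : R => (x ^+ n)%:E).
Hypothesis no_finite_support : forall S : set R, finite_set S -> (0 < mu (~` S))%E.
Implicit Types (p : {poly R[i]}) (x : R).

Local Notation I f := (Rintegral mu setT f).

(** Polynomials are integrable: they are combinations of the moments x^n. *)
Lemma poly_cintegrable p : cintegrable mu (fun x => p.[real_complex R x]).
Proof.
have monomial n : cintegrable mu (fun x => real_complex R (x ^+ n)).
  split; first exact: moments.
  apply: (eq_integrable measurableT (cst 0%E)); last exact: integrable0.
  by move=> x _.
have -> : (fun x => p.[real_complex R x])
        = fun x => \sum_(i < size p) p`_i * real_complex R (x ^+ i).
  by apply: funext => x; rewrite horner_coef; apply: eq_bigr => i _; rewrite rmorphXn.
by apply: cintegrable_sum => i; exact: cintegrableZ.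
Qed.

Lemma hornerJ p x : (pconj p).[real_complex R x] = Num.conj p.[real_complex R x].
Proof.
have conj_real : Num.conj (real_complex R x) = real_complex R x by exact: conjc_real.
by rewrite /pconj -{1}conj_real horner_map.
Qed.

Lemma fmuD p q : fmu mu (p + q) = fmu mu p + fmu mu q.
Proof.
rewrite /fmu -cintD; try exact: poly_cintegrable.
by congr cint; apply: funext => x; rewrite hornerD.
Qed.

Lemma fmuZ z p : fmu mu (z *: p) = z * fmu mu p.
Proof.
rewrite /fmu -cintZ; try exact: poly_cintegrable.
by congr cint; apply: funext => x; rewrite hornerZ.
Qed.

Lemma fmuJ p : fmu mu (pconj p) = Num.conj (fmu mu p).
Proof.
rewrite /fmu -cintJ; try exact: poly_cintegrable.
by congr cint; apply: funext => x; rewrite hornerJ.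
Qed.

Lemma horner_sqnorm p x :
  (pconj p * p).[real_complex R x] = `|p.[real_complex R x]| ^+ 2.
Proof. by rewrite hornerM hornerJ normCK mulrC. Qed.

Lemma fmu_sqnorm p :
  fmu mu (pconj p * p)
  = real_complex R (I (fun x => complex.Re (pconj p * p).[real_complex R x])).
Proof.
apply: complex_ext; rewrite /fmu ?Re_cint ?Im_cint //=.
transitivity (I (fun=> 0)); last by rewrite Rintegral_cst // mul0r.
by apply: eq_Rintegral => x _; rewrite horner_sqnorm ger0_Im.
Qed.

Lemma Re_sqnorm_ge0 p x : 0 <= complex.Re (pconj p * p).[real_complex R x].
Proof.
have := exprn_ge0 2 (normr_ge0 p.[real_complex R x]).
by rewrite -horner_sqnorm lecE => /andP[].
Qed.

Lemma fmu_sqnorm_ge0 p : 0 <= fmu mu (pconj p * p).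
Proof. by rewrite fmu_sqnorm ler0c; apply: Rintegral_ge0 => x _; exact: Re_sqnorm_ge0. Qed.

(** Faithfulness: as mu does not live on a finite set, only a = 0 has f(a^+ a) = 0. *)
Lemma fmu_sqnorm_eq0 p : fmu mu (pconj p * p) = 0 -> p = 0.
Proof.
rewrite fmu_sqnorm => /(congr1 (@complex.Re R)) /= If0.
have [N [mN muN sN]] := Rintegral_eq0_null (poly_cintegrable (pconj p * p)).1 (Re_sqnorm_ge0 p) If0.
apply/eqP; apply: contraT => pn0.
set Z := [set x : R | p.[real_complex R x] = 0].
have finZ : finite_set Z := poly_real_zeros_finite pn0.
have mZ : measurable Z.
  apply: countable_measurable; last exact: finite_set_countable.
  by move=> t; exact: measurable_set1.
(* Off the real zeros of p the integrand |p|^2 is nonzero, so ~` Z is null. *)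
have ZcN : ~` Z `<=` N.
  move=> x /= px_neq0; apply: sN => /=; apply: contra_notN px_neq0 => /eqP Re0.
  have : (pconj p * p).[real_complex R x] = 0.
    by apply: complex_ext; rewrite // horner_sqnorm ger0_Im.
  by rewrite horner_sqnorm => /eqP; rewrite sqrf_eq0 normr_eq0 => /eqP.
have := no_finite_support finZ.
by rewrite (subset_measure0 (measurableC mZ) mN ZcN muN) ltxx.
Qed.

End PolynomialFunctional.

Definition double_commutator (F : comNzRingType) (T : {poly F} -> {poly F}) : {poly F} :=
  T 'X^2 - ('X * T 'X) *+ 2 + 'X^2 * T 1.

(** [[a d^2 b, q], q] = 2ab: the double commutator extracts the coefficient of d^2. *)
Lemma double_commutator_d2 (F : comNzRingType) (a b : {poly F}) :
  double_commutator (fun g => a * deriv (deriv (b * g))) = (a * b) *+ 2.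
Proof.
rewrite /double_commutator mulr1 !(derivM, derivD, derivMn, derivX, derivXn) /=.
rewrite -polyC1 derivC expr1 expr0; ring.
Qed.

Lemma double_commutator_sum (F : comNzRingType) (I : Type) (r : seq I)
    (T : I -> {poly F} -> {poly F}) :
  double_commutator (fun g => \sum_(i <- r) T i g) = \sum_(i <- r) double_commutator (T i).
Proof.
elim: r => [|i r IH]; first by rewrite /double_commutator !big_nil; ring.
by rewrite big_cons -IH /double_commutator !big_cons; ring.
Qed.

Section BimoduleX.
Variable R : realType.
Implicit Types (s : Xsum R) (a b : {poly R[i]}).

Lemma dopE (g : {poly R[i]}) : dop g = deriv g.
Proof. by rewrite /dop /pop scalerA mulrN -expr2 sqr_i opprK scale1r. Qed.

Lemma BvalE s g : Bval s g = \sum_(c <- s) c.1 * deriv (deriv (c.2 * g)).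
Proof. by apply: eq_bigr => c _; rewrite /Aop !dopE. Qed.

(** The element of B denoted by s determines h = sum_j a_j b_j. *)
Lemma double_commutator_Bval s : double_commutator (Bval s) = hsum s *+ 2.
Proof.
rewrite (_ : Bval s = fun g => \sum_(c <- s) c.1 * deriv (deriv (c.2 * g))); last first.
  by apply: funext => g; exact: BvalE.
rewrite double_commutator_sum /hsum -sumrMnl.
by apply: eq_bigr => c _; exact: double_commutator_d2.
Qed.

(** Well-definedness: h only depends on the element of B, since 2h does. *)
Lemma hsum_wd s1 s2 : Bval s1 =1 Bval s2 -> hsum s1 = hsum s2.
Proof.
move=> /funext eqB.
have : hsum s1 *+ 2 = hsum s2 *+ 2 by rewrite -!double_commutator_Bval eqB.
rewrite -[hsum s1 *+ 2]mulr_natr -[hsum s2 *+ 2]mulr_natr => /mulIf; apply.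
by rewrite -polyC_natr polyC_eq0 pnatr_eq0.
Qed.

Lemma pconjM a b : pconj (a * b) = pconj a * pconj b.
Proof. exact: rmorphM. Qed.

Lemma pconjK a : pconj (pconj a) = a.
Proof. by apply/polyP => k; rewrite /pconj !coef_map /= conjCK. Qed.

Lemma hsum_cat s1 s2 : hsum (s1 ++ s2) = hsum s1 + hsum s2.
Proof. exact: big_cat. Qed.

Lemma hsum_scale z s : hsum (Xscale z s) = z *: hsum s.
Proof. by rewrite /hsum big_map scaler_sumr; apply: eq_bigr => c _; rewrite scalerAl. Qed.

Lemma hsum_adj s : hsum (Xadj s) = pconj (hsum s).
Proof.
rewrite /hsum big_map /pconj rmorph_sum; apply: eq_bigr => c _ /=.
by rewrite -rmorphM mulrC.
Qed.

Lemma hsum_act a s b : hsum (Xact a s b) = a * hsum s * b.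
Proof.
rewrite /hsum big_map mulr_sumr mulr_suml; apply: eq_bigr => c _ /=.
by rewrite !mulrA.
Qed.

Lemma hsum_lact a s : hsum (Xlact a s) = a * hsum s.
Proof. by rewrite /hsum big_map mulr_sumr; apply: eq_bigr => c _; rewrite mulrA. Qed.

End BimoduleX.

Section CauchySchwarz.
Variable R : realType.
Variables (D : lmodType R[i]) (ip : D -> D -> R[i]).
Hypothesis ip_inner : is_inner_product ip.

(** Hermitian symmetry turns linearity in the first argument into conjugate
    linearity in the second. *)
Lemma inner_product_linear_r u z v w :
  ip u (z *: v + w) = Num.conj z * ip u v + ip u w.
Proof.
case: ip_inner => linl herm _ _.
by rewrite [LHS]herm linl rmorphD rmorphM /= (herm u v) (herm u w) !conjCK.
Qed.

Lemma inner_product_0r u : ip u 0 = 0.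
Proof.
have := inner_product_linear_r u 1 0 0.
by rewrite scale1r addr0 rmorph1 mul1r -{1}[ip u 0]addr0 => /addrI.
Qed.

Lemma inner_product_scale_l z u w : ip (z *: u) w = z * ip u w.
Proof.
case: ip_inner => linl herm _ _.
rewrite -[z *: u]addr0 linl [ip 0 w]herm inner_product_0r.
by rewrite rmorph0 addr0.
Qed.

Lemma inner_product_scale_r u z v : ip u (z *: v) = Num.conj z * ip u v.
Proof. by rewrite -[z *: v]addr0 inner_product_linear_r inner_product_0r addr0. Qed.

(** The Cauchy-Schwarz inequality: expand 0 <= <w, w> for w = <v,v> u - <u,v> v. *)
Lemma inner_product_cauchy_schwarz u v : `|ip u v| ^+ 2 <= ip u u * ip v v.
Proof.
case: (ip_inner) => linl herm ip_ge0 ip_def.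
have [->|vn0] := eqVneq v 0.
  by rewrite !inner_product_0r normr0 expr0n mulr0.
set A := ip u u; set B := ip v v; set c := ip u v.
have B_gt0 : 0 < B by rewrite lt_def ip_ge0 andbT; apply: contra vn0 => /eqP /ip_def ->.
have conjB : Num.conj B = B := geC0_conj (ltW B_gt0).
have := ip_ge0 (B *: u + (- c) *: v).
rewrite linl inner_product_scale_l !inner_product_linear_r !inner_product_scale_r.
rewrite -/A -/B -/c conjB (herm u v) -/c rmorphN.
have -> : B * (B * A + - Num.conj c * c) + - c * (B * Num.conj c + - Num.conj c * B)
        = B * (B * A - c * Num.conj c) by ring.
by rewrite pmulr_rge0 // subr_ge0 -normCK mulrC.
Qed.

End CauchySchwarz.

Section GNS.
Variable R : realType.
Variable mu : {measure set R -> \bar R}.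

Lemma gns_strong_star_rep : strong_star_rep (gns_ip mu) (@thetaF0 R) (@gns_rho R).
Proof.
rewrite /gns_ip /thetaF0 /gns_rho; split.
- by move=> a z u v; rewrite mulrDr scalerAr.
- by move=> a b z u; rewrite mulrDl scalerAl.
- by move=> a b u; rewrite mulrA.
- by move=> u; rewrite mul1r.
- by move=> a u v; rewrite pconjM pconjK mulrCA mulrA.
- by move=> s1 s2 /hsum_wd ->.
- by move=> s1 s2 u; rewrite hsum_cat mulrDl.
- by move=> z s u; rewrite hsum_scale scalerAl.
- by move=> s z u v; rewrite mulrDr scalerAr.
- by move=> s u v; rewrite hsum_adj pconjM pconjK mulrCA mulrA.
- by move=> a b s u v; rewrite hsum_act pconjM pconjK; congr fmu; ring.
Qed.

Hypothesis moments : forall n : nat, mu.-integrable setT (fun x : R => (x ^+ n)%:E).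
Hypothesis no_finite_support : forall S : set R, finite_set S -> (0 < mu (~` S))%E.

Lemma gns_inner_product : is_inner_product (gns_ip mu).
Proof.
split=> [z u v w|u v|u|u].
- by rewrite /gns_ip mulrDr fmuD // -scalerAr fmuZ.
- by rewrite /gns_ip -fmuJ // pconjM pconjK mulrC.
- exact: fmu_sqnorm_ge0.
- exact: fmu_sqnorm_eq0.
Qed.

End GNS.

Theorem mainTheorem12 (R : realType) (mu : {measure set R -> \bar R})
  (Hpoly : forall n : nat, mu.-integrable setT (fun x : R => (x ^+ n)%:E))
  (Hsupp : forall S : set R, finite_set S -> (0 < mu (~` S))%E) :
  (* (i) F_0 is a well-defined hermitian linear functional on X *)
  [/\ forall s1 s2 : Xsum R, Bval s1 =1 Bval s2 -> F0 mu s1 = F0 mu s2,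
      forall s1 s2 : Xsum R, F0 mu (s1 ++ s2) = F0 mu s1 + F0 mu s2,
      forall (z : R[i]) (s : Xsum R), F0 mu (Xscale z s) = z * F0 mu s
    & forall s : Xsum R, F0 mu (Xadj s) = Num.conj (F0 mu s)] /\
  (* (ii) Cauchy-Schwarz type bound *)
  (forall (s : Xsum R) (a : {poly R[i]}),
     `|F0 mu (Xlact (pconj a) s)| ^+ 2
       <= fmu mu (pconj (hsum s) * hsum s) * fmu mu (pconj a * a)) /\
  (* (iii) GNS representation on D_f = C[x] and the strong *-representation *)
  [/\ is_inner_product (@gns_ip R mu),
      strong_star_rep (@gns_ip R mu) (@thetaF0 R) (@gns_rho R),
      forall (a b : {poly R[i]}) (s : Xsum R),
        F0 mu (Xact a s b)
        = gns_ip mu (thetaF0 s (gns_rho b (gns_phi R))) (gns_rho (pconj a) (gns_phi R))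
    & forall u : {poly R[i]}, thetaF0 (Xd2 R) u = u].
Proof.
have ip_inner := gns_inner_product Hpoly Hsupp.
split; [split|split].
- by move=> s1 s2 /hsum_wd; rewrite /F0 => ->.
- by move=> s1 s2; rewrite /F0 hsum_cat fmuD.
- by move=> z s; rewrite /F0 hsum_scale fmuZ.
- by move=> s; rewrite /F0 hsum_adj fmuJ.
- move=> s a; rewrite /F0 hsum_lact.
  exact: inner_product_cauchy_schwarz ip_inner (hsum s) a.
split=> //.
- exact: gns_strong_star_rep.
- move=> a b s; rewrite /F0 /gns_ip /thetaF0 /gns_rho /gns_phi !mulr1 pconjK.
  by rewrite hsum_act mulrA.
- by move=> u; rewrite /thetaF0 /hsum big_seq1 mulr1 mul1r.
Qed.
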